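(* Let $\Delta$ be a simplicial polytopal fan in $\mathbb{R}^d$ with ray generators $\mathbf{v}_1,\ldots,\mathbf{v}_n$. For all polytopes $P(\mathbf{h}),P(\mathbf{h}')\in\mathcal{P}(\Delta)$, \[ d_H(P(\mathbf{h}),P(\mathbf{h}'))\le\sqrt{d}\,c^\Delta\,\|\mathbf{h}-\mathbf{h}'\|. \]
   Context: A fan is simplicial if every cone is generated by linearly independent vectors; polytopal if it is the normal fan of a polytope. For $\mathbf{h}\in\mathbb{R}^n$, $P(\mathbf{h})=\{\mathbf{x}\colon\langle\mathbf{x},\mathbf{v}_i\rangle\le h_i\ \forall i\}$. The deformation cone $\mathcal{P}(\Delta)$ is the set of polytopes whose normal fan is coarsened by $\Delta$, identified via support vectors $\mathbf{h}=(h_P(\mathbf{v}_i))_i$ with a closed polyhedral cone in $\mathbb{R}^n$. For $\mathbf{u}\in\mathbb{R}^d$, with $\sigma$ the cone of $\Delta$ containing $\mathbf{u}$ in its relative interior and $\mathbf{u}=\sum_{k\in I_\sigma}\lambda_k\mathbf{v}_k$ over the generators of $\sigma$, set $[\mathbf{u}]_i=\lambda_i$ for $i\in I_\sigma$ and $0$ otherwise. $c^\Delta=\max_{\mathbf{u}\in\mathbb{S}^{d-1}}\max_{1\le i\le n}[\mathbf{u}]_i$. $d_H$ is the Hausdorff distance. *)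

From HB Require Import structures.
From mathcomp Require Import all_boot all_order all_algebra.
From mathcomp Require Import all_classical all_reals.
Set Implicit Arguments. Unset Strict Implicit. Unset Printing Implicit Defensive.
Import Order.TTheory GRing.Theory Num.Theory.
Local Open Scope classical_set_scope.
Local Open Scope ring_scope.

Section Fans.
Variable R : realType.

Definition dotv k (x y : 'rV[R]_k) : R := \sum_(j < k) x 0 j * y 0 j.
Definition enorm k (x : 'rV[R]_k) : R := Num.sqrt (dotv x x).

Variables (d n : nat) (v : 'I_n -> 'rV[R]_d).

Definition gcone (S : {set 'I_n}) : set 'rV[R]_d :=
  [set x | exists lam : 'I_n -> R,
     (forall i, i \in S -> 0 <= lam i) /\ x = \sum_(i in S) lam i *: v i].
(* its linear span (= affine hull, as cones contain 0) *)
Definition gspan (S : {set 'I_n}) : set 'rV[R]_d :=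
  [set x | exists lam : 'I_n -> R, x = \sum_(i in S) lam i *: v i].
Definition relint_gcone (S : {set 'I_n}) (u : 'rV[R]_d) : Prop :=
  gcone S u /\ exists e : R, 0 < e /\
    forall y, gspan S y -> enorm (y - u) < e -> gcone S y.

Definition is_face (C F : set 'rV[R]_d) : Prop :=
  exists w : 'rV[R]_d, (forall x, C x -> dotv w x <= 0) /\
    F = C `&` [set x | dotv w x = 0].

(* Delta is a (pointed, polyhedral) fan whose rays are generated by v_1..v_n:
   each cone of Delta is the cone generated by a set of the v_i, namely all
   the v_i lying in it; Delta is closed under taking faces; two cones of Delta
   meet in a common face; the rays of Delta are exactly the cones of the v_i. *)
Definition is_fan (Delta : {set {set 'I_n}}) : Prop :=
  [/\ (forall i, v i != 0 /\ [set i]%SET \in Delta),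
      (forall S, S \in Delta -> forall i, gcone S (v i) -> i \in S),
      (forall S, S \in Delta -> forall F, is_face (gcone S) F ->
          exists2 T, T \in Delta & F = gcone T) &
      (forall S T, S \in Delta -> T \in Delta ->
          is_face (gcone S) (gcone S `&` gcone T) /\
          is_face (gcone T) (gcone S `&` gcone T))].

Definition is_simplicial (Delta : {set {set 'I_n}}) : Prop :=
  forall S, S \in Delta -> forall lam : 'I_n -> R,
    \sum_(i in S) lam i *: v i = 0 -> forall i, i \in S -> lam i = 0.

Definition is_polytope (P : set 'rV[R]_d) : Prop :=
  exists m (p : 'I_m.+1 -> 'rV[R]_d),
    P = [set x | exists mu : 'I_m.+1 -> R, (forall k, 0 <= mu k) /\
           \sum_k mu k = 1 /\ x = \sum_k mu k *: p k].

(* normal cone of P at x; the normal fan of P is {normal_cone P x | x in P} *)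
Definition normal_cone (P : set 'rV[R]_d) (x : 'rV[R]_d) : set 'rV[R]_d :=
  [set u | forall y, P y -> dotv u y <= dotv u x].

Definition is_polytopal (Delta : {set {set 'I_n}}) : Prop :=
  exists Q, is_polytope Q /\
    forall C : set 'rV[R]_d,
      (exists2 x, Q x & C = normal_cone Q x) <->
      (exists2 S, S \in Delta & C = gcone S).

Definition coarsened_by (Delta : {set {set 'I_n}}) (P : set 'rV[R]_d) : Prop :=
  (forall S, S \in Delta -> exists2 x, P x & gcone S `<=` normal_cone P x) /\
  (forall x, P x -> normal_cone P x =
     \bigcup_(S in [set S | S \in Delta /\ gcone S `<=` normal_cone P x]) gcone S).

Definition support_fun (P : set 'rV[R]_d) (u : 'rV[R]_d) : R :=
  sup [set dotv x u | x in P].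

Definition Ph (h : 'rV[R]_n) : set 'rV[R]_d :=
  [set x | forall i, dotv x (v i) <= h 0 i].

Definition deformation_cone (Delta : {set {set 'I_n}}) : set 'rV[R]_n :=
  [set h | exists P, [/\ is_polytope P, coarsened_by Delta P &
                        forall i, h 0 i = support_fun P (v i)]].

(* [u]: coefficients of u w.r.t. the generators of the cone sigma of Delta
   containing u in its relative interior (0 outside I_sigma) *)
Definition fan_coords (Delta : {set {set 'I_n}}) (u : 'rV[R]_d) : 'rV[R]_n :=
  xget 0 [set lam : 'rV[R]_n | exists2 S, S \in Delta &
     [/\ relint_gcone S u, (forall i, i \notin S -> lam 0 i = 0) &
         u = \sum_(i in S) lam 0 i *: v i]].

Definition cDelta (Delta : {set {set 'I_n}}) : R :=
  sup [set r | exists (u : 'rV[R]_d) (i : 'I_n), enorm u = 1 /\ r = fan_coords Delta u 0 i].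

End Fans.

Definition hausdorff (R : realType) (d : nat) (A B : set 'rV[R]_d) : R :=
  Num.max (sup [set inf [set enorm (x - y) | y in B] | x in A])
          (sup [set inf [set enorm (x - y) | x in A] | y in B]).

(* Let x be in P(h) and u a unit vector, lying in the relative interior of the
   cone sigma of Delta, u = sum_(k in sigma) lam_k v_k with lam = [u].  Since Delta
   refines the normal fan of P(h'), one point z of P(h') attains h'_k for all the
   directions v_k, k in sigma, hence
     <u, x - z> <= sum_k lam_k (h_k - h'_k) <= |lam| |h - h'| <= sqrt d c^Delta |h - h'|,
   as 0 <= lam_k <= c^Delta and |sigma| <= d.  A point which is, in every direction,
   within K of a bounded convex set is within K of the set; this is shown by a
   descent argument, which avoids nearest-point projections. *)

From HB Require Import structures.
From mathcomp Require Import all_boot all_order all_algebra.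
From mathcomp Require Import all_classical all_reals.
From mathcomp Require Import ring lra.
Set Implicit Arguments. Unset Strict Implicit. Unset Printing Implicit Defensive.
Import Order.TTheory GRing.Theory Num.Theory.
Local Open Scope classical_set_scope.
Local Open Scope ring_scope.

Section InnerProduct.
Variables (R : realType) (k : nat).
Implicit Types (x y z : 'rV[R]_k) (a : R).

Lemma dotvC x y : dotv x y = dotv y x.
Proof. by apply: eq_bigr => j _; rewrite mulrC. Qed.

Lemma dotvDl x y z : dotv (x + y) z = dotv x z + dotv y z.
Proof. by rewrite /dotv -big_split; apply: eq_bigr => j _; rewrite !mxE mulrDl. Qed.

Lemma dotvZl a x y : dotv (a *: x) y = a * dotv x y.
Proof. by rewrite /dotv mulr_sumr; apply: eq_bigr => j _; rewrite !mxE mulrA. Qed.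

Lemma dotv0l y : dotv 0 y = 0.
Proof. by rewrite -(scale0r 0) dotvZl mul0r. Qed.

Lemma dotvNl x y : dotv (- x) y = - dotv x y.
Proof. by rewrite -scaleN1r dotvZl mulN1r. Qed.

Lemma dotvBl x y z : dotv (x - y) z = dotv x z - dotv y z.
Proof. by rewrite dotvDl dotvNl. Qed.

Lemma dotvDr x y z : dotv x (y + z) = dotv x y + dotv x z.
Proof. by rewrite dotvC dotvDl !(dotvC x). Qed.

Lemma dotvZr a x y : dotv x (a *: y) = a * dotv x y.
Proof. by rewrite dotvC dotvZl dotvC. Qed.

Lemma dotv0r x : dotv x 0 = 0.
Proof. by rewrite dotvC dotv0l. Qed.

Lemma dotvNr x y : dotv x (- y) = - dotv x y.
Proof. by rewrite dotvC dotvNl dotvC. Qed.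

Lemma dotvBr x y z : dotv x (y - z) = dotv x y - dotv x z.
Proof. by rewrite dotvDr dotvNr. Qed.

Lemma dotv_suml (I : finType) (P : pred I) (c : I -> R) (F : I -> 'rV[R]_k) y :
  dotv (\sum_(i | P i) c i *: F i) y = \sum_(i | P i) c i * dotv (F i) y.
Proof.
rewrite (big_morph (fun z => dotv z y) (fun x1 x2 => dotvDl x1 x2 y) (dotv0l y)).
by apply: eq_bigr => i _; rewrite dotvZl.
Qed.

Lemma dotv_sumr (I : finType) (P : pred I) (c : I -> R) (F : I -> 'rV[R]_k) x :
  dotv x (\sum_(i | P i) c i *: F i) = \sum_(i | P i) c i * dotv x (F i).
Proof. by rewrite dotvC dotv_suml; apply: eq_bigr => i _; rewrite dotvC. Qed.

Lemma dotvv_ge0 x : 0 <= dotv x x.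
Proof. by apply: sumr_ge0 => j _; rewrite -expr2 sqr_ge0. Qed.

Lemma dotvv_eq0 x : (dotv x x == 0) = (x == 0).
Proof.
apply/idP/eqP => [|->]; last by rewrite dotv0l.
rewrite psumr_eq0 => [/allP x0|j _]; last by rewrite -expr2 sqr_ge0.
apply/rowP => j; rewrite mxE; apply/eqP.
by have /implyP/(_ isT) := x0 j (mem_index_enum _); rewrite mulf_eq0 orbb.
Qed.

Lemma enorm_ge0 x : 0 <= enorm x.
Proof. exact: sqrtr_ge0. Qed.

Lemma enorm_sqr x : enorm x ^+ 2 = dotv x x.
Proof. by rewrite sqr_sqrtr // dotvv_ge0. Qed.

Lemma enorm_eq0 x : (enorm x == 0) = (x == 0).
Proof. by rewrite sqrtr_eq0 le_eqVlt ltNge dotvv_ge0 orbF dotvv_eq0. Qed.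

Lemma enorm0 : enorm (0 : 'rV[R]_k) = 0.
Proof. by apply/eqP; rewrite enorm_eq0. Qed.

Lemma enormZ a x : enorm (a *: x) = `|a| * enorm x.
Proof. by rewrite /enorm dotvZl dotvZr mulrA -expr2 sqrtrM ?sqr_ge0 // sqrtr_sqr. Qed.

Lemma enormN x : enorm (- x) = enorm x.
Proof. by rewrite -scaleN1r enormZ normrN1 mul1r. Qed.

Lemma enorm_distC x y : enorm (x - y) = enorm (y - x).
Proof. by rewrite -enormN opprB. Qed.

Lemma enorm_normalize x : x != 0 -> enorm ((enorm x)^-1 *: x) = 1.
Proof.
rewrite -enorm_eq0 => x0.
by rewrite enormZ ger0_norm ?invr_ge0 ?enorm_ge0 // mulVf.
Qed.

Lemma cauchy_schwarz x y : dotv x y <= enorm x * enorm y.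
Proof.
have [->|x0] := eqVneq x 0; first by rewrite dotv0l enorm0 mul0r.
have [->|y0] := eqVneq y 0; first by rewrite dotv0r enorm0 mulr0.
have a0 : 0 < enorm x by rewrite lt_neqAle eq_sym enorm_eq0 x0 enorm_ge0.
have b0 : 0 < enorm y by rewrite lt_neqAle eq_sym enorm_eq0 y0 enorm_ge0.
(* expand [0 <= |b x - a y|^2] with [a = |x|], [b = |y|] *)
have := dotvv_ge0 (enorm y *: x - enorm x *: y).
rewrite !(dotvBl, dotvBr, dotvZl, dotvZr) -!enorm_sqr (dotvC y x).
set a := enorm x; set b := enorm y; set c := dotv x y.
have -> : b * (b * a ^+ 2 - a * c) - a * (b * c - a * b ^+ 2)
  = 2 * (a * b) * (a * b - c) by ring.
by rewrite pmulr_rge0 ?mulr_gt0 // subr_ge0.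
Qed.

Lemma enormD x y : enorm (x + y) <= enorm x + enorm y.
Proof.
rewrite -ler_sqr ?nnegrE ?addr_ge0 ?enorm_ge0 // enorm_sqr.
rewrite !(dotvDl, dotvDr) (dotvC y x) -!enorm_sqr.
by have := cauchy_schwarz x y; lra.
Qed.

Lemma enorm_sum (I : finType) (P : pred I) (F : I -> 'rV[R]_k) :
  enorm (\sum_(i | P i) F i) <= \sum_(i | P i) enorm (F i).
Proof.
elim/big_rec2: _ => [|i y s _ IH]; first by rewrite enorm0.
by apply: le_trans (enormD _ _) _; rewrite lerD2l.
Qed.

Lemma abs_coord_le_enorm x j : `|x 0 j| <= enorm x.
Proof.
rewrite -sqrtr_sqr ler_sqrt ?dotvv_ge0 // /dotv (bigD1 j) //= expr2 lerDl.
by apply: sumr_ge0 => i _; rewrite -expr2 sqr_ge0.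
Qed.

Lemma enorm_delta (j : 'I_k) : enorm (delta_mx 0 j : 'rV[R]_k) = 1.
Proof.
rewrite /enorm /dotv (bigD1 j) //= big1 => [|i /negbTE ij]; last by rewrite !mxE ij mul0r.
by rewrite !mxE !eqxx mulr1 addr0 sqrtr1.
Qed.

Lemma dotv_supp (S : {set 'I_k}) x y :
  (forall j, j \notin S -> x 0 j = 0) -> dotv x y = \sum_(j in S) x 0 j * y 0 j.
Proof.
move=> xS; rewrite /dotv (bigID (mem S)) /= [X in _ + X]big1 ?addr0 // => j jS.
by rewrite xS ?mul0r.
Qed.

End InnerProduct.

Section Hausdorff.
Variable R : realType.

Lemma sup_inf_le (S T : Type) (A : set S) (B : set T) (f : S -> T -> R) K :
  A !=set0 -> (forall x y, 0 <= f x y) ->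
  (forall x, A x -> forall e, 0 < e -> exists2 y, B y & f x y <= K + e) ->
  sup [set inf [set f x y | y in B] | x in A] <= K.
Proof.
move=> [x0 Ax0] f_ge0 near_B; apply: ge_sup.
  by exists (inf [set f x0 y | y in B]), x0.
move=> _ [x Ax <-]; apply/ler_addgt0Pr => e e0.
have [y By fxy] := near_B x Ax e e0; apply: le_trans fxy.
apply: ge_inf; last by exists y.
by exists 0 => _ [y' _ <-].
Qed.

Lemma hausdorff_le d (A B : set 'rV[R]_d) K :
  A !=set0 -> B !=set0 ->
  (forall x, A x -> forall e, 0 < e -> exists2 y, B y & enorm (x - y) <= K + e) ->
  (forall y, B y -> forall e, 0 < e -> exists2 x, A x & enorm (x - y) <= K + e) ->
  hausdorff A B <= K.
Proof.
move=> A0 B0 nearB nearA; rewrite /hausdorff ge_max.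
by apply/andP; split; apply: sup_inf_le => // x y; exact: enorm_ge0.
Qed.

End Hausdorff.

Section ConvexApproximation.
Variable R : realType.

Lemma no_uniform_descent (T : Type) (B : set T) (f : T -> R) (g : R) :
  0 < g -> (forall y, B y -> 0 <= f y) ->
  (forall y, B y -> exists2 y', B y' & f y' <= f y - g) -> forall y, ~ B y.
Proof.
move=> g0 f_ge0 descend y0 By0.
have iter N : exists2 y, B y & f y <= f y0 - N%:R * g.
  elim: N => [|N [y By fy]]; first by exists y0; rewrite ?mul0r ?subr0.
  have [y' By' fy'] := descend y By; exists y' => //; apply: le_trans fy' _.
  by rewrite -natr1 mulrDl mul1r opprD addrA lerD2r.
have fg_ge0 : 0 <= f y0 / g by rewrite divr_ge0 ?f_ge0 ?ltW.
have [y By] := iter (Num.Def.archi_bound (f y0 / g)).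
have := archi_boundP fg_ge0; rewrite ltr_pdivrMr // => big_N.
by have := f_ge0 y By; lra.
Qed.

Variable d : nat.
Implicit Types (x y z : 'rV[R]_d).

Lemma descent_step x y z K e t :
  0 <= K -> 0 < e -> 0 <= t -> t * dotv (z - y) (z - y) <= e ^+ 2 ->
  K + e < enorm (x - y) -> dotv (x - y) (x - z) <= enorm (x - y) * K ->
  enorm (x - (y + t *: (z - y))) ^+ 2 <= enorm (x - y) ^+ 2 - t * e ^+ 2.
Proof.
move=> K0 e0 t0 tq far gap.
have xz : x - z = (x - y) - (z - y) by rewrite opprB addrA subrK.
have -> : x - (y + t *: (z - y)) = (x - y) - t *: (z - y) by rewrite opprD addrA.
rewrite xz in gap; move: far gap tq; move: (x - y) (z - y) => w q.
rewrite !enorm_sqr !(dotvBl, dotvBr, dotvZl, dotvZr) (dotvC q w) -enorm_sqr.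
have := enorm_ge0 w; set r := enorm w; set p := dotv w q; set s := dotv q q.
(* [p >= r (r - K) >= e^2], and then [t^2 s <= t e^2] *)
move=> r0 far gap tq.
have pe : e ^+ 2 <= p by nra.
nra.
Qed.

(* If every point of [B] were farther than [K + e] from [x], moving from [y]
   towards the [z] given for the direction of [x - y] would decrease
   [|x - y|^2] by a fixed amount. *)
Lemma convex_approx (B : set 'rV[R]_d) x K :
  0 <= K -> B !=set0 ->
  (forall y z t, B y -> B z -> 0 <= t <= 1 -> B (y + t *: (z - y))) ->
  (exists M, forall y, B y -> enorm y <= M) ->
  (forall u, enorm u = 1 -> exists2 z, B z & dotv u (x - z) <= K) ->
  forall e, 0 < e -> exists2 y, B y & enorm (x - y) <= K + e.
Proof.
move=> K0 [y0 By0] convB [M BM] gapB e e0.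
apply: contrapT => /forall2NP far.
have {}far y : B y -> K + e < enorm (x - y).
  by move=> By; case: (far y) => // /negP; rewrite -ltNge.
have M0 : 0 <= M by apply: le_trans (BM _ By0); exact: enorm_ge0.
pose D := (M + M) ^+ 2.
have diam y z : B y -> B z -> dotv (z - y) (z - y) <= D.
  move=> By Bz; rewrite -enorm_sqr ler_sqr ?nnegrE ?enorm_ge0 ?addr_ge0 //.
  by apply: le_trans (enormD _ _) _; rewrite enormN lerD ?BM.
have D0 : 0 <= D by exact: sqr_ge0.
pose t := Num.min 1 (e ^+ 2 / (D + 1)).
have t0 : 0 < t by rewrite lt_min ltr01 /= divr_gt0 ?exprn_gt0 // ltr_wpDl.
have t1 : t <= 1 by rewrite ge_min lexx.
have tD : t * D <= e ^+ 2.
  apply: le_trans (_ : t * (D + 1) <= _); first by rewrite ler_pM2l // lerDl.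
  by rewrite -ler_pdivlMr ?ltr_wpDl // ge_min lexx orbT.
apply: (no_uniform_descent (f := fun y => enorm (x - y) ^+ 2) (g := t * e ^+ 2)) By0.
- by rewrite mulr_gt0 ?exprn_gt0.
- by move=> y _; exact: sqr_ge0.
move=> y By; set w := x - y.
have w_gt0 : 0 < enorm w := le_lt_trans (addr_ge0 K0 (ltW e0)) (far y By).
have w0 : w != 0 by rewrite -enorm_eq0 gt_eqF.
have [z Bz gap] := gapB _ (enorm_normalize w0).
exists (y + t *: (z - y)); first by apply: convB => //; rewrite ltW.
apply: descent_step (far y By) _ => //; first exact: ltW.
  by apply: le_trans tD; rewrite ler_pM2l ?diam.
by move: gap; rewrite dotvZl ler_pdivrMl.
Qed.

End ConvexApproximation.

Section FreeFamily.
Variables (R : realType) (d n : nat) (v : 'I_n -> 'rV[R]_d).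

Definition free_on (S : {set 'I_n}) := forall lam : 'I_n -> R,
  \sum_(i in S) lam i *: v i = 0 -> forall i, i \in S -> lam i = 0.

Definition gen_mx (S : {set 'I_n}) : 'M[R]_(#|S|, d) :=
  \matrix_(i, j) v (enum_val i) 0 j.

Lemma mul_gen_mx (S : {set 'I_n}) (a : 'rV[R]_#|S|) :
  a *m gen_mx S = \sum_(i < #|S|) a 0 i *: v (enum_val i).
Proof. by apply/rowP => j; rewrite !mxE summxE; apply: eq_bigr => i _; rewrite !mxE. Qed.

Variable S : {set 'I_n}.
Hypothesis freeS : free_on S.

Lemma free_on_coef_eq (a b : 'I_n -> R) :
  \sum_(i in S) a i *: v i = \sum_(i in S) b i *: v i ->
  forall k, k \in S -> a k = b k.
Proof.
move=> ab k kS; apply/eqP; rewrite -subr_eq0; apply/eqP.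
apply: (freeS (lam := fun i => a i - b i) _ kS).
by under eq_bigr do rewrite scalerBl; rewrite sumrB ab subrr.
Qed.

Lemma row_free_gen_mx : row_free (gen_mx S).
Proof.
apply: inj_row_free => a a0; apply/rowP => i.
pose lam k := a 0 (enum_rank_in (enum_valP i) k).
have lam0 : \sum_(k in S) lam k *: v k = 0.
  rewrite big_enum_val -[RHS]a0 mul_gen_mx; apply: eq_bigr => j _.
  by rewrite /lam enum_valK_in.
by have := freeS lam0 (enum_valP i); rewrite /lam enum_valK_in mxE.
Qed.

Lemma free_on_card : (#|S| <= d)%N.
Proof. by have /eqP <- := row_free_gen_mx; exact: rank_leq_col. Qed.

Lemma free_on_coef_bound : exists2 C : R, 0 <= C &
  forall (lam : 'I_n -> R) k, k \in S ->
  `|lam k| <= C * enorm (\sum_(i in S) lam i *: v i).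
Proof.
(* the coefficients are recovered linearly through a right inverse [B] of [gen_mx S] *)
have /row_freeP [B gB] := row_free_gen_mx.
have C0 : 0 <= \sum_j \sum_i `|B j i| by do 2![apply: sumr_ge0 => ? _].
exists (\sum_j \sum_i `|B j i|) => // lam k kS.
pose a := \row_(i < #|S|) lam (enum_val i).
have aB : a = (\sum_(i in S) lam i *: v i) *m B.
  by rewrite big_enum_val -[a]mulmx1 -gB mulmxA mul_gen_mx; congr (_ *m _);
    apply: eq_bigr => i _; rewrite mxE.
have -> : lam k = a 0 (enum_rank_in kS k) by rewrite mxE enum_rankK_in.
rewrite aB mxE mulr_suml; apply: le_trans (ler_norm_sum _ _ _) _.
apply: ler_sum => j _; rewrite normrM mulrC.
apply: ler_pM => //; last exact: abs_coord_le_enorm.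
by rewrite (bigD1 (enum_rank_in kS k)) //= lerDl sumr_ge0.
Qed.

Lemma free_on_dual (b : 'I_n -> R) :
  exists w : 'rV[R]_d, forall k, k \in S -> dotv w (v k) = b k.
Proof.
have /row_freeP [B gB] := row_free_gen_mx.
pose bc := \col_(i < #|S|) b (enum_val i).
exists (B *m bc)^T => k kS.
have /(congr1 (fun M : 'cV[R]_#|S| => M (enum_rank_in kS k) 0)) :
  gen_mx S *m (B *m bc) = bc by rewrite mulmxA gB mul1mx.
rewrite !mxE enum_rankK_in // => <-.
by rewrite dotvC; apply: eq_bigr => j _; rewrite !mxE enum_rankK_in.
Qed.

End FreeFamily.

Section Polytope.
Variables (R : realType) (d : nat) (P : set 'rV[R]_d).
Hypothesis polyP : is_polytope P.

Lemma polytope_max (u : 'rV[R]_d) :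
  exists2 x, P x & forall y, P y -> dotv u y <= dotv u x.
Proof.
case: polyP => m [p ->].
have [k _ maxk] := @arg_maxP _ R _ ord0 predT (fun k => dotv u (p k)) isT.
exists (p k).
  exists (fun j => if j == k then 1 else 0); split; first by move=> j; case: ifP.
  by split; rewrite (bigD1 k) //= eqxx ?scale1r big1 ?addr0 // => j /negbTE ->;
    rewrite ?scale0r.
move=> _ [mu [mu0 [mu1 ->]]]; rewrite dotv_sumr.
apply: le_trans (_ : \sum_j mu j * dotv u (p k) <= _).
  by apply: ler_sum => j _; apply: ler_wpM2l => //; exact: maxk.
by rewrite -mulr_suml mu1 mul1r.
Qed.

Lemma polytope_nonempty : P !=set0.
Proof. by have [x Px _] := polytope_max 0; exists x. Qed.

Lemma polytope_convex y z t :
  P y -> P z -> 0 <= t <= 1 -> P (y + t *: (z - y)).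
Proof.
case: polyP => m [p ->] [a [a0 [a1 ->]]] [b [b0 [b1 ->]]] /andP [t0 t1].
exists (fun k => a k + t * (b k - a k)); split.
  by move=> k; have := a0 k; have := b0 k; nra.
split; first by rewrite big_split /= -mulr_sumr sumrB a1 b1 subrr mulr0 addr0.
rewrite -sumrB scaler_sumr -big_split /=; apply: eq_bigr => k _.
by rewrite -scalerBl scalerA -scalerDl.
Qed.

Lemma polytope_bounded : exists M, forall x, P x -> enorm x <= M.
Proof.
case: polyP => m [p ->]; exists (\sum_k enorm (p k)) => _ [mu [mu0 [mu1 ->]]].
apply: le_trans (enorm_sum _ _) _; apply: ler_sum => k _.
rewrite enormZ ger0_norm // ler_piMl ?enorm_ge0 // -mu1 (bigD1 k) //= lerDl.
exact: sumr_ge0.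
Qed.

Lemma support_fun_ge (u x : 'rV[R]_d) : P x -> dotv x u <= support_fun P u.
Proof.
move=> Px; apply: sup_upper_bound; last by exists x.
have [M PM] := polytope_bounded; split; first by exists (dotv x u), x.
exists (M * enorm u) => _ [y Py <-]; apply: le_trans (cauchy_schwarz y u) _.
by apply: ler_wpM2r; [exact: enorm_ge0 | exact: PM].
Qed.

Lemma support_fun_attained (u x : 'rV[R]_d) : P x ->
  (forall y, P y -> dotv u y <= dotv u x) -> support_fun P u = dotv x u.
Proof.
move=> Px maxx; apply/le_anti; rewrite support_fun_ge // andbT.
apply: ge_sup; first by exists (dotv x u), x.
by move=> _ [y Py <-]; rewrite dotvC (dotvC x); exact: maxx.
Qed.

Lemma polytope_sub_Ph n (v : 'I_n -> 'rV[R]_d) (h : 'rV[R]_n) :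
  (forall i, h 0 i = support_fun P (v i)) -> P `<=` Ph v h.
Proof. by move=> hP x Px i; rewrite hP support_fun_ge. Qed.

End Polytope.

Section Cones.
Variables (R : realType) (d n : nat) (v : 'I_n -> 'rV[R]_d).
Implicit Types (S T : {set 'I_n}) (lam : 'I_n -> R).

Lemma gcone_gen S i : i \in S -> gcone v S (v i).
Proof.
move=> iS; exists (fun k => if k == i then 1 else 0); split; first by move=> k; case: ifP.
rewrite (bigD1 i) //= eqxx scale1r big1 ?addr0 // => k /andP [_ /negbTE ->].
by rewrite scale0r.
Qed.

Lemma relint_gcone_pos S lam : free_on v S -> (forall k, k \in S -> 0 < lam k) ->
  relint_gcone v S (\sum_(i in S) lam i *: v i).
Proof.
move=> freeS lam_gt0.
have [C C0 coefC] := free_on_coef_bound freeS.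
pose m := \big[Num.min/1]_(k in S) lam k.
have m0 : 0 < m by apply/bigmin_gtP; split; [exact: ltr01 | exact: lam_gt0].
split; first by exists lam; split => // k kS; exact/ltW/lam_gt0.
pose e := m / (C + 1); have C1 : 0 < C + 1 by rewrite ltr_wpDl.
have eC : e * (C + 1) = m by rewrite divfK ?gt_eqF.
exists e; split => [|_ [mu ->] close]; first by rewrite divr_gt0.
exists mu; split => // k kS.
have := coefC (fun i => mu i - lam i) k kS.
under eq_bigr do rewrite scalerBl; rewrite sumrB ler_norml => /andP [lo _].
have mk : m <= lam k by exact: bigmin_le_cond.
(* [mu k >= lam k - C |y - u| >= m - C e >= 0] *)
by have := enorm_ge0 (\sum_(i in S) mu i *: v i - \sum_(i in S) lam i *: v i); nra.
Qed.

Variable Delta : {set {set 'I_n}}.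
Hypothesis fanD : is_fan v Delta.

Lemma gcone_proper_face S lam k0 : S \in Delta -> free_on v S ->
  (forall k, k \in S -> 0 <= lam k) -> k0 \in S -> lam k0 = 0 ->
  exists2 T, T \in Delta & (#|T| < #|S|)%N /\ gcone v T (\sum_(i in S) lam i *: v i).
Proof.
move=> SD freeS lam0 k0S lamk0.
case: fanD => _ gensD facesD _.
(* [w] is the outer normal of the facet of [gcone v S] opposite to [v k0] *)
have [w wS] := free_on_dual freeS (fun k => if k == k0 then -1 else 0).
have w_gcone mu : dotv w (\sum_(i in S) mu i *: v i) = - mu k0.
  rewrite dotv_sumr (bigD1 k0) //= wS // eqxx mulrN1 big1 ?addr0 // => k /andP [kS kk0].
  by rewrite wS // (negbTE kk0) mulr0.
have face : is_face (gcone v S) (gcone v S `&` [set x | dotv w x = 0]).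
  by exists w; split => // _ [mu [mu0 ->]]; rewrite w_gcone oppr_le0 mu0.
have [T TD ET] := facesD S SD _ face.
exists T => //; split.
  apply/proper_card/properP; split.
    apply/fintype.subsetP => i iT; apply: (gensD S SD i).
    by have := gcone_gen iT; rewrite -ET => -[].
  exists k0 => //; apply/negP => k0T.
  have := gcone_gen k0T; rewrite -ET => -[_ /=]; rewrite wS // eqxx.
  by move/eqP; rewrite oppr_eq0 oner_eq0.
by rewrite -ET; split; [exists lam | rewrite /= w_gcone lamk0 oppr0].
Qed.

Lemma polytopal_cover u : is_polytopal v Delta -> exists2 S, S \in Delta & gcone v S u.
Proof.
move=> [Q [polyQ normal_fanQ]].
have [x Qx maxx] := polytope_max polyQ u.
have [S SD ES] := (normal_fanQ (normal_cone Q x)).1 (ex_intro2 _ _ x Qx erefl).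
by exists S; rewrite -?ES.
Qed.

Hypothesis simpD : is_simplicial v Delta.

Lemma fan_relint_cover u : is_polytopal v Delta ->
  exists2 S, S \in Delta & relint_gcone v S u.
Proof.
move=> /(polytopal_cover u) [S SD uS].
elim: {S}_.+1 {-2}S (ltnSn #|S|) SD uS => // N IH S SN SD [lam [lam0 ulam]].
case: (pselect (exists2 k, k \in S & lam k = 0)) => [[k0 k0S lamk0] | pos].
  have [T TD [TS uT]] := gcone_proper_face SD (simpD SD) lam0 k0S lamk0.
  by apply: (IH T); rewrite ?ulam // (leq_trans TS) // -ltnS.
exists S; rewrite // ulam; apply: relint_gcone_pos (simpD SD) _ => k kS.
by rewrite lt_def lam0 // andbT; apply/eqP => lamk; apply: pos; exists k.
Qed.

Lemma simplicial_coef_bound : exists2 C : R, 0 <= C &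
  forall S, S \in Delta -> forall lam k, k \in S ->
  `|lam k| <= C * enorm (\sum_(i in S) lam i *: v i).
Proof.
have /choice [C CS] : forall S, exists C : R, 0 <= C /\ (S \in Delta ->
    forall lam k, k \in S -> `|lam k| <= C * enorm (\sum_(i in S) lam i *: v i)).
  move=> S; have [SD|] := boolP (S \in Delta); last by exists 0.
  by have [C C0 coefC] := free_on_coef_bound (simpD SD); exists C.
exists (\sum_S C S); first by apply: sumr_ge0 => S _; case: (CS S).
move=> S SD lam k kS; apply: le_trans ((CS S).2 SD lam k kS) _.
by rewrite ler_wpM2r ?enorm_ge0 // (bigD1 S) //= lerDl sumr_ge0 // => T _; case: (CS T).
Qed.

End Cones.

Section DeformationCone.
Variables (R : realType) (d n : nat) (v : 'I_n -> 'rV[R]_d).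
Variable Delta : {set {set 'I_n}}.
Hypotheses (fanD : is_fan v Delta) (simpD : is_simplicial v Delta)
  (polD : is_polytopal v Delta).
Implicit Types u : 'rV[R]_d.

Definition is_fan_coords (u : 'rV[R]_d) (lam : 'rV[R]_n) :=
  exists2 S, S \in Delta & [/\ relint_gcone v S u,
    (forall i, i \notin S -> lam 0 i = 0) & u = \sum_(i in S) lam 0 i *: v i].

Lemma fan_coordsP u : is_fan_coords u (fan_coords v Delta u).
Proof.
apply: xgetPex; have [S SD uS] := fan_relint_cover fanD simpD u polD.
have [lam [_ ulam]] := uS.1.
exists (\row_i (if i \in S then lam i else 0)), S => //; split => //.
  by move=> i iS; rewrite mxE (negbTE iS).
by rewrite ulam; apply: eq_bigr => i iS; rewrite mxE iS.
Qed.

Lemma fan_coords_ge0 u k : 0 <= fan_coords v Delta u 0 k.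
Proof.
have [S SD [[[mu [mu0 umu]] _] lam0 ulam]] := fan_coordsP u.
have [kS|kS] := boolP (k \in S); last by rewrite lam0.
by rewrite (free_on_coef_eq (simpD SD) (b := mu)) ?mu0 // -ulam -umu.
Qed.

Lemma fan_coords_le_cDelta u k :
  enorm u = 1 -> fan_coords v Delta u 0 k <= cDelta v Delta.
Proof.
move=> u1; apply: sup_upper_bound; last by exists u, k.
split; first by exists (fan_coords v Delta u 0 k), u, k.
have [C C0 coefC] := simplicial_coef_bound simpD.
exists C => _ [w [i [w1 ->]]].
have [S SD [_ lam0 wlam]] := fan_coordsP w.
have [iS|iS] := boolP (i \in S); last by rewrite lam0.
apply: le_trans (ler_norm _) _; rewrite -[C]mulr1 -w1 [in enorm w]wlam.
exact: (coefC S SD (fun j => fan_coords v Delta w 0 j)).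
Qed.

Lemma cDelta_ge0 u : enorm u = 1 -> 0 <= cDelta v Delta.
Proof.
move=> u1; have [S _ [_ _ ulam]] := fan_coordsP u.
have [k kS] : exists k, k \in S.
  apply: contrapT => /forallNP noS; move: u1.
  rewrite ulam big_pred0 => [|i]; last exact/negP/noS.
  by rewrite enorm0 => /eqP; rewrite eq_sym oner_eq0.
exact: le_trans (fan_coords_ge0 u k) (fan_coords_le_cDelta k u1).
Qed.

Lemma enorm_fan_coords_le u : enorm u = 1 ->
  enorm (fan_coords v Delta u) <= Num.sqrt d%:R * cDelta v Delta.
Proof.
move=> u1; have c0 := cDelta_ge0 u1.
have [S SD [_ lam0 _]] := fan_coordsP u; set lam := fan_coords v Delta u in lam0 *.
rewrite -(ger0_norm c0) -sqrtr_sqr -sqrtrM ?ler0n // ler_sqrt ?mulr_ge0 ?sqr_ge0 //.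
rewrite (dotv_supp _ lam0); apply: le_trans (_ : \sum_(j in S) cDelta v Delta ^+ 2 <= _).
  apply: ler_sum => j _; rewrite expr2.
  by apply: ler_pM; rewrite ?fan_coords_ge0 ?fan_coords_le_cDelta.
rewrite sumr_const -[_ *+ #|S|]mulr_natl; apply: ler_wpM2r; first exact: sqr_ge0.
by rewrite ler_nat (free_on_card (simpD SD)).
Qed.

Lemma sqrt_dim_cDelta_ge0 : 0 <= Num.sqrt d%:R * cDelta v Delta.
Proof.
have [d0|d_gt0] := posnP d.
  by rewrite (_ : Num.sqrt d%:R = 0) ?mul0r // d0 sqrtr0.
by rewrite mulr_ge0 ?sqrtr_ge0 // (cDelta_ge0 (enorm_delta R (Ordinal d_gt0))).
Qed.

Lemma Ph_support_gap P' (h h' : 'rV[R]_n) x u :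
  is_polytope P' -> coarsened_by v Delta P' ->
  (forall i, h' 0 i = support_fun P' (v i)) -> Ph v h x -> enorm u = 1 ->
  exists2 z, P' z & dotv u (x - z) <= Num.sqrt d%:R * cDelta v Delta * enorm (h - h').
Proof.
move=> polyP' [coarseP' _] h'P' hx u1.
have [S SD [_ lam0 ulam]] := fan_coordsP u; set lam := fan_coords v Delta u in lam0 ulam.
have [z P'z Snormal] := coarseP' S SD; exists z => //.
have h'z k : k \in S -> h' 0 k = dotv z (v k).
  move=> kS; rewrite h'P' (support_fun_attained polyP' P'z) //.
  exact: Snormal (gcone_gen v kS).
apply: le_trans (_ : dotv lam (h - h') <= _); last first.
  apply: le_trans (cauchy_schwarz _ _) _; apply: ler_wpM2r; first exact: enorm_ge0.
  exact: enorm_fan_coords_le.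
rewrite (dotv_supp _ lam0) ulam dotv_suml; apply: ler_sum => k kS.
rewrite !mxE h'z // dotvBr dotvC (dotvC (v k)).
apply: ler_wpM2l; first exact: fan_coords_ge0.
by rewrite lerD2r; exact: hx.
Qed.

Lemma Ph_nonempty h : deformation_cone v Delta h -> Ph v h !=set0.
Proof.
move=> [P [polyP _ hP]]; have [x Px] := polytope_nonempty polyP.
by exists x; exact: (polytope_sub_Ph polyP hP Px).
Qed.

Lemma Ph_approx h h' : deformation_cone v Delta h' ->
  forall x, Ph v h x -> forall e, 0 < e -> exists2 y, Ph v h' y &
    enorm (x - y) <= Num.sqrt d%:R * cDelta v Delta * enorm (h - h') + e.
Proof.
move=> [P' [polyP' coarseP' h'P']] x hx.
have K0 : 0 <= Num.sqrt d%:R * cDelta v Delta * enorm (h - h').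
  by rewrite mulr_ge0 ?enorm_ge0 ?sqrt_dim_cDelta_ge0.
move=> e /(convex_approx K0 (polytope_nonempty polyP') (polytope_convex polyP')
  (polytope_bounded polyP') (fun u => Ph_support_gap polyP' coarseP' h'P' hx)).
by case=> y P'y xy; exists y => //; exact: (polytope_sub_Ph polyP' h'P' P'y).
Qed.

End DeformationCone.

Theorem lemma2p5 (R : realType) (d n : nat) (v : 'I_n -> 'rV[R]_d)
  (Delta : {set {set 'I_n}}) :
  is_fan v Delta -> is_simplicial v Delta -> is_polytopal v Delta ->
  forall h h' : 'rV[R]_n,
    deformation_cone v Delta h -> deformation_cone v Delta h' ->
    hausdorff (Ph v h) (Ph v h') <=
      Num.sqrt (d%:R) * cDelta v Delta * enorm (h - h').
Proof.
move=> fanD simpD polD h h' hD h'D.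
apply: hausdorff_le; [exact: Ph_nonempty hD | exact: Ph_nonempty h'D | |].
  exact: Ph_approx.
move=> y h'y e /(Ph_approx fanD simpD polD hD h'y) [x hx yx].
by exists x; rewrite // enorm_distC (enorm_distC h).
Qed.
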